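(* Let $n \geq 1$, let $S^{n-1}$ be the topological $(n-1)$-sphere with a base point $\ast$, regarded as a pseudotopological space, and let $[0,1]$ be the topological interval. Let $\Sigma S^{n-1}$ be the pseudotopological based suspension, i.e. the quotient of $S^{n-1}\times[0,1]$ in $\mathbf{PsTop}$ by the relation $(x,k) \sim (x',k) \sim (\ast, t)$ for all $x,x' \in S^{n-1}$, $k \in \{0,1\}$, $t\in[0,1]$. Then the quotient pseudotopology on $\Sigma S^{n-1}$ coincides with the pseudotopology induced by the quotient topology, and $\Sigma S^{n-1} \cong (S^n, \tau)$, where $(S^n,\tau)$ is the topological $n$-sphere regarded as a pseudotopological space.
   Context: A convergence space is a set $X$ with a relation between filters on $X$ and points (written $\lambda\to x$) such that $\lambda\to x$ and $\lambda\subseteq\lambda'$ imply $\lambda'\to x$, and the principal ultrafilter $\dot x\to x$. It is pseudotopological iff $\lambda\to x$ holds exactly when every ultrafilter containing $\lambda$ converges to $x$. Continuous maps: $\lambda\to x$ implies $f(\lambda)\to f(x)$, where $f(\lambda)$ is generated by images. $\mathbf{PsTop}$ is the category of pseudotopological spaces and continuous maps. A topological space is regarded as a pseudotopological space by $\lambda\to x$ iff $\lambda$ contains the neighbourhood filter of $x$. Products carry the initial structure with respect to projections; the quotient by a surjection $q$ in $\mathbf{PsTop}$ carries the final pseudotopology, i.e. the finest pseudotopology making $q$ continuous. *)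

From mathcomp Require Import all_boot all_order all_algebra.
From mathcomp Require Import classical_sets reals.
Set Implicit Arguments. Unset Strict Implicit. Unset Printing Implicit Defensive.
Import Order.TTheory GRing.Theory Num.Theory.
Local Open Scope classical_set_scope.
Local Open Scope ring_scope.

Definition is_filter {X : Type} (F : set (set X)) : Prop :=
  F setT /\ ~ F set0 /\
  (forall A B, F A -> F B -> F (A `&` B)) /\
  (forall A B, A `<=` B -> F A -> F B).

Definition is_ultra {X : Type} (F : set (set X)) : Prop :=
  is_filter F /\ forall G, is_filter G -> F `<=` G -> G = F.

Definition principal {X : Type} (x : X) : set (set X) := [set A | A x].

Definition fimage {X Y : Type} (f : X -> Y) (F : set (set X)) : set (set Y) :=
  [set B | exists2 A, F A & f @` A `<=` B].

Definition convergence (X : Type) := set (set X) -> X -> Prop.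

Definition is_convergence {X : Type} (c : convergence X) : Prop :=
  (forall F G x, is_filter F -> is_filter G -> F `<=` G -> c F x -> c G x) /\
  (forall x, c (principal x) x).

Definition is_pseudotop {X : Type} (c : convergence X) : Prop :=
  is_convergence c /\
  forall F x, is_filter F ->
    (c F x <-> forall U, is_ultra U -> F `<=` U -> c U x).

Definition conv_continuous {X Y : Type} (cX : convergence X) (cY : convergence Y)
  (f : X -> Y) : Prop :=
  forall F x, is_filter F -> cX F x -> cY (fimage f F) (f x).

Definition conv_homeomorphic {X Y : Type} (cX : convergence X) (cY : convergence Y)
  : Prop :=
  exists (f : X -> Y) (g : Y -> X),
    cancel f g /\ cancel g f /\ conv_continuous cX cY f /\ conv_continuous cY cX g.

(** a topology (given by its open sets) regarded as a pseudotopology: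
    F -> x iff F contains the neighbourhood filter of x *)
Definition top_conv {X : Type} (op : set (set X)) : convergence X :=
  fun F x => forall U, op U -> U x -> F U.

(** product of convergence spaces: initial structure w.r.t. the projections *)
Definition prod_conv {X Y : Type} (cX : convergence X) (cY : convergence Y)
  : convergence (X * Y) :=
  fun F p => cX (fimage fst F) p.1 /\ cY (fimage snd F) p.2.

(** final pseudotopology of q : the finest pseudotopology making q continuous *)
Definition final_pstop {X Q : Type} (cX : convergence X) (q : X -> Q) : convergence Q :=
  fun F y => forall c : convergence Q, is_pseudotop c -> conv_continuous cX c q -> c F y.

Definition metric_open {R : realType} {X : Type} (d : X -> X -> R) : set (set X) := fun U =>
  forall x, U x -> exists2 e : R, 0 < e & forall y, d x y < e -> U y.

Definition prod_open {X Y : Type} (oX : set (set X)) (oY : set (set Y))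
  : set (set (X * Y)) := fun W =>
  forall p, W p -> exists U, exists V,
    [/\ oX U, oY V, U p.1, V p.2 & U `*` V `<=` W].

Definition quot_open {X Q : Type} (oX : set (set X)) (q : X -> Q) : set (set Q) := fun U =>
  oX (q @^-1` U).

Definition sphere (R : realType) (m : nat) :=
  {x : 'I_m.+1 -> R | \sum_(i < m.+1) x i ^+ 2 = 1}.

Definition sph_dist (R : realType) (m : nat) (x y : sphere R m) : R :=
  Num.sqrt (\sum_(i < m.+1) (sval x i - sval y i) ^+ 2).

Definition sphere_open (R : realType) (m : nat) : set (set (sphere R m)) :=
  metric_open (@sph_dist R m).

Arguments sphere_open : clear implicits.

Definition unit_interval (R : realType) := {t : R | 0 <= t <= 1}.

Definition interval_open (R : realType) : set (set (unit_interval R)) :=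
  metric_open (fun s t : unit_interval R => `|sval s - sval t|).

Arguments interval_open : clear implicits.

Definition cyl_conv (R : realType) (m : nat) : convergence (sphere R m * unit_interval R) :=
  prod_conv (top_conv (sphere_open R m)) (top_conv (interval_open R)).

Arguments cyl_conv : clear implicits.

Definition cyl_open (R : realType) (m : nat) : set (set (sphere R m * unit_interval R)) :=
  prod_open (sphere_open R m) (interval_open R).

Arguments cyl_open : clear implicits.

(** the based-suspension relation: (x,0) ~ (x',0) ~ (x'',1) ~ (pt,t),
    i.e. S^m x {0,1} u {pt} x [0,1] is collapsed to a point *)
Definition susp_collapsed (R : realType) (m : nat) (pt : sphere R m)
  (a : sphere R m * unit_interval R) : Prop :=
  sval a.2 = 0 \/ sval a.2 = 1 \/ a.1 = pt.

Definition susp_rel (R : realType) (m : nat) (pt : sphere R m)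
  (a b : sphere R m * unit_interval R) : Prop :=
  a = b \/ (susp_collapsed pt a /\ susp_collapsed pt b).

(* An explicit map from S^(n-1) x [0,1] onto S^n is continuous, surjective,
   and identifies exactly the points related by the suspension relation.
   The cylinder is compact (every ultrafilter on it converges) and S^n is
   Hausdorff.  An ultrafilter on the quotient lifts to the cylinder,
   converges there, and its limit pushed down is a limit for every
   pseudotopology making q continuous; since the quotient topology is
   Hausdorff (through the induced injection into S^n), that is its only limit.
   Hence the final pseudotopology and the quotient topology have the same
   convergent ultrafilters, so they agree, and the same argument shows that
   the inverse of the induced bijection onto S^n is continuous. *)

From Pilot Require Import Defs.
From mathcomp Require Import all_boot all_order all_algebra.
From mathcomp Require Import classical_sets reals boolp filter topology normedtype.
From mathcomp Require Import ring lra.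
Set Implicit Arguments. Unset Strict Implicit. Unset Printing Implicit Defensive.
Import Order.TTheory GRing.Theory Num.Theory.
Import numFieldNormedType.Exports.
Local Open Scope classical_set_scope.
Local Open Scope ring_scope.

(** * Filters and pseudotopologies *)

Lemma is_filter_proper {X : Type} (F : set (set X)) : is_filter F -> ProperFilter F.
Proof.
move=> [FT [F0 [FI FS]]]; constructor; first exact: F0.
by constructor => // A B; apply: FI.
Qed.

Lemma proper_is_filter {X : Type} (F : set (set X)) : ProperFilter F -> is_filter F.
Proof.
move=> FF; split; first exact: filterT.
split; first exact: filter_not_empty.
by split=> A B; [apply: filterI | apply: filterS].
Qed.

Lemma is_ultra_ext {X : Type} (F : set (set X)) :
  is_filter F -> exists2 U, is_ultra U & F `<=` U.
Proof.
move=> /is_filter_proper /ultraFilterLemma [U [UU FU]]; exists U => //.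
split; first by apply: proper_is_filter; apply: ultra_proper.
by move=> G /is_filter_proper; apply: max_filter.
Qed.

Lemma is_ultra_setVsetC {X : Type} (U : set (set X)) (A : set X) :
  is_ultra U -> U A \/ U (~` A).
Proof.
move=> [hU Umax]; apply: in_ultra_setVsetC; split; first exact: is_filter_proper.
by move=> G /proper_is_filter; apply: Umax.
Qed.

Lemma fimage_preimage {X Y : Type} (f : X -> Y) (F : set (set X)) (B : set Y) :
  is_filter F -> fimage f F B <-> F (f @^-1` B).
Proof.
move=> /is_filter_proper FF; split=> [[A FA sAB]|FB].
  by apply: filterS FA => x Ax; apply: sAB; exists x.
by exists (f @^-1` B) => // _ [x Bfx <-].
Qed.

Lemma fimage_is_filter {X Y : Type} (f : X -> Y) (F : set (set X)) :
  is_filter F -> is_filter (fimage f F).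
Proof.
move=> hF; have FF := is_filter_proper hF.
suff -> : fimage f F = fmap f F by apply: proper_is_filter.
by apply/seteqP; split=> B /(fimage_preimage f B hF).
Qed.

Lemma ultra_lift {X Y : Type} (q : X -> Y) (U : set (set Y)) :
  (forall y, exists x, q x = y) -> is_ultra U -> exists2 W, is_ultra W & fimage q W = U.
Proof.
move=> q_surj hU; have UF := is_filter_proper hU.1.
pose G := [set A | exists2 B, U B & q @^-1` B `<=` A].
have hG : is_filter G.
  split; first by exists setT => //; apply: filterT.
  split.
    move=> [B UB sB]; have [y By] := filter_ex UB; have [x qx] := q_surj y.
    by apply: (sB x); rewrite /= qx.
  split; last by move=> A A' sAA' [B UB sB]; exists B => //; apply: subset_trans sAA'.
  move=> A A' [B UB sB] [B' UB' sB']; exists (B `&` B'); first exact: filterI.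
  by move=> x [? ?]; split; [apply: sB | apply: sB'].
have [W hW GW] := is_ultra_ext hG; exists W => //.
apply: hU.2; first exact: fimage_is_filter hW.1.
by move=> B UB; apply/fimage_preimage; [exact: hW.1 | apply: GW; exists B].
Qed.

Lemma top_conv_pseudotop {X : Type} (op : set (set X)) : is_pseudotop (top_conv op).
Proof.
split; first by split=> [F G x _ _ FG Fx U oU Ux|x U _ Ux] //; apply: FG; apply: Fx.
move=> F x hF; split=> [Fx U _ FU V oV Vx|Ux O oO Ox]; first by apply: FU; apply: Fx.
have FF := is_filter_proper hF.
apply: contrapT => nFO.
(* the filter generated by F and ~` O, proper since O is not in F *)
pose G := [set A | F (O `|` A)].
have hG : is_filter G.
  split; first by rewrite /G /= setUT; apply: filterT.
  split; first by rewrite /G /= setU0.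
  split=> [A B FA FB|A B AB]; first by rewrite /G /= setUIr; apply: filterI.
  by rewrite /G /=; apply: filterS => y [Oy|Ay]; [left | right; apply: AB].
have [U hU GU] := is_ultra_ext hG; have UF := is_filter_proper hU.1.
have UO : U O.
  by apply: (Ux U hU) => // A FA; apply: GU; apply: filterS FA => y; right.
have UnO : U (~` O) by apply: GU; rewrite /G /= setUv; apply: filterT.
by have [y [Oy nOy]] := filter_ex (filterI UO UnO).
Qed.

Section FinalPseudotopology.
Variables (X Q : Type) (cX : convergence X) (q : X -> Q).

Lemma final_pstop_pseudotop : is_pseudotop (final_pstop cX q).
Proof.
split.
  split=> [F G y hF hG FG Fy c hc qc|y c hc qc]; last exact: hc.1.2.
  exact: hc.1.1 F G y hF hG FG (Fy c hc qc).
move=> F y hF; split=> [Fy U hU FU c hc qc|Uy c hc qc].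
  exact: hc.1.1 F U y hF hU.1 FU (Fy c hc qc).
by apply/(hc.2 F y hF) => U hU FU; apply: Uy.
Qed.

Lemma final_pstop_continuous : conv_continuous cX (final_pstop cX q) q.
Proof. by move=> F x hF Fx c hc qc; apply: qc. Qed.

End FinalPseudotopology.

Lemma quot_open_continuous {X Q : Type} (oX : set (set X)) (q : X -> Q) :
  conv_continuous (top_conv oX) (top_conv (quot_open oX q)) q.
Proof. by move=> F x hF Fx O oO Ox; apply/fimage_preimage => //; apply: Fx. Qed.

Section ProductTopology.
Variables (X Y : Type) (oX : set (set X)) (oY : set (set Y)).

Lemma prod_conv_top F p : is_filter F ->
  prod_conv (top_conv oX) (top_conv oY) F p -> top_conv (prod_open oX oY) F p.
Proof.
move=> hF [Fp1 Fp2] W oW Wp; have FF := is_filter_proper hF.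
have [U [V [oU oV Up Vp sW]]] := oW p Wp.
have /(fimage_preimage _ _ hF) FU := Fp1 U oU Up.
have /(fimage_preimage _ _ hF) FV := Fp2 V oV Vp.
by apply: filterS (filterI FU FV) => z [Uz Vz]; apply: sW.
Qed.

Hypotheses (oXT : oX setT) (oYT : oY setT).
Hypothesis oXI : forall U U', oX U -> oX U' -> oX (U `&` U').
Hypothesis oYI : forall V V', oY V -> oY V' -> oY (V `&` V').

Definition prod_nbhs (p : X * Y) : set (set (X * Y)) :=
  [set W | exists U V, [/\ oX U, oY V, U p.1, V p.2 & U `*` V `<=` W]].

Lemma prod_nbhs_filter p : is_filter (prod_nbhs p).
Proof.
split; first by exists setT, setT.
split; first by move=> [U [V [_ _ Up Vp /(_ p)]]]; apply.
split=> [W W' [U [V [oU oV Up Vp sW]]] [U' [V' [oU' oV' Up' Vp' sW']]]|W W' sWW'].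
  exists (U `&` U'), (V `&` V'); split; [exact: oXI|exact: oYI|by []|by []|].
  by move=> z [[? ?] [? ?]]; split; [apply: sW|apply: sW'].
by move=> [U [V [oU oV Up Vp sW]]]; exists U, V; split=> //; apply: subset_trans sWW'.
Qed.

Lemma prod_nbhs_conv p : prod_conv (top_conv oX) (top_conv oY) (prod_nbhs p) p.
Proof.
split=> [U oU Up|V oV Vp]; apply/(fimage_preimage _ _ (prod_nbhs_filter p)).
  by exists U, setT; split=> // z [].
by exists setT, V; split=> // z [].
Qed.

Lemma prod_continuous_open (Z : Type) (oZ : set (set Z)) (f : X * Y -> Z) :
  conv_continuous (prod_conv (top_conv oX) (top_conv oY)) (top_conv oZ) f ->
  forall V, oZ V -> prod_open oX oY (f @^-1` V).
Proof.
move=> fc V oV p Vfp; apply/(fimage_preimage _ _ (prod_nbhs_filter p)).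
exact: fc (prod_nbhs_filter p) (prod_nbhs_conv p) V oV Vfp.
Qed.

End ProductTopology.

Section MetricTopology.
Variables (R : realType) (X : Type) (d : X -> X -> R).

Lemma metric_openT : metric_open d setT.
Proof. by move=> x _; exists 1. Qed.

Lemma metric_openI U V : metric_open d U -> metric_open d V -> metric_open d (U `&` V).
Proof.
move=> oU oV x [Ux Vx]; have [e e0 sU] := oU x Ux; have [e' e'0 sV] := oV x Vx.
exists (Num.min e e'); first by rewrite lt_min e0.
by move=> y; rewrite lt_min => /andP [? ?]; split; [apply: sU | apply: sV].
Qed.

End MetricTopology.

Section CompactHausdorffQuotient.
Variables (X Q Y : Type) (cX : convergence X) (oX : set (set X)) (oY : set (set Y)).
Variables (q : X -> Q) (f : X -> Y).
Hypothesis cX_compact : forall U, is_ultra U -> exists x, cX U x.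
Hypothesis cX_top : forall F x, is_filter F -> cX F x -> top_conv oX F x.
Hypothesis q_surj : forall y, exists x, q x = y.
Hypothesis f_open : forall V, oY V -> oX (f @^-1` V).
Hypothesis f_ker : forall a b, f a = f b <-> q a = q b.
Hypothesis f_surj : forall w, exists x, f x = w.
Hypothesis oY_hausdorff : forall G w w',
  is_filter G -> top_conv oY G w -> top_conv oY G w' -> w = w'.

Let qc := top_conv (quot_open oX q).

Definition quot_map (y : Q) : Y := f (projT1 (cid (q_surj y))).

Lemma quot_mapE x : quot_map (q x) = f x.
Proof. by apply/f_ker; rewrite /quot_map; case: cid. Qed.

Lemma quot_map_inj : injective quot_map.
Proof.
move=> y y'; have [x <-] := q_surj y; have [x' <-] := q_surj y'.
by rewrite !quot_mapE => /f_ker.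
Qed.

Lemma quot_map_continuous : conv_continuous qc (top_conv oY) quot_map.
Proof.
move=> G y hG Gy V oV Vy; apply/fimage_preimage => //; apply: Gy => //.
rewrite /quot_open (_ : _ @^-1` _ = f @^-1` V); first exact: f_open.
by apply/seteqP; split=> x /=; rewrite quot_mapE.
Qed.

Lemma quot_hausdorff G y y' : is_filter G -> qc G y -> qc G y' -> y = y'.
Proof.
move=> hG Gy Gy'; apply: quot_map_inj.
by apply: (oY_hausdorff (fimage_is_filter _ hG)); apply: quot_map_continuous.
Qed.

Lemma final_quot_conv F y : is_filter F -> final_pstop cX q F y -> qc F y.
Proof.
move=> hF; apply; first exact: top_conv_pseudotop.
by move=> F' x hF' /(cX_top hF'); apply: quot_open_continuous.
Qed.

Lemma final_ultra_conv U : is_ultra U -> exists x, final_pstop cX q U (q x).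
Proof.
move=> hU; have [W hW <-] := ultra_lift q_surj hU; have [x Wx] := cX_compact hW.
by exists x; apply: final_pstop_continuous hW.1 Wx.
Qed.

Lemma final_pstopE F y : is_filter F -> final_pstop cX q F y <-> qc F y.
Proof.
move=> hF; split; first exact: final_quot_conv.
move=> Fy; apply/((final_pstop_pseudotop cX q).2 F y hF) => U hU FU.
have [x Ux] := final_ultra_conv hU.
suff -> : y = q x by [].
apply: (quot_hausdorff hU.1); last exact: final_quot_conv hU.1 Ux.
by move=> O oO Oy; apply: FU; apply: Fy.
Qed.

Definition quot_map_inv (w : Y) : Q := q (projT1 (cid (f_surj w))).

Lemma quot_map_invK : cancel quot_map_inv quot_map.
Proof. by move=> w; rewrite /quot_map_inv quot_mapE; case: cid. Qed.

Lemma quot_mapK : cancel quot_map quot_map_inv.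
Proof. by move=> y; apply: quot_map_inj; rewrite quot_map_invK. Qed.

Lemma quot_map_inv_continuous :
  conv_continuous (top_conv oY) (final_pstop cX q) quot_map_inv.
Proof.
move=> F w hF Fw.
apply/((final_pstop_pseudotop cX q).2 _ _ (fimage_is_filter _ hF)) => U hU FU.
have [x Ux] := final_ultra_conv hU.
have hqU := fimage_is_filter quot_map hU.1.
have Uw : top_conv oY (fimage quot_map U) w.
  move=> V oV Vw; exists (quot_map_inv @` V); first by apply: FU; exists V; first exact: Fw.
  by move=> _ [_ [v Vv <-] <-]; rewrite quot_map_invK.
have Ux' := quot_map_continuous hU.1 (final_quot_conv hU.1 Ux).
by rewrite (oY_hausdorff hqU Uw Ux') quot_mapK.
Qed.

Theorem compact_hausdorff_quotient :
  (forall F y, is_filter F -> final_pstop cX q F y <-> qc F y) /\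
  conv_homeomorphic (final_pstop cX q) (top_conv oY).
Proof.
split; first exact: final_pstopE.
exists quot_map, quot_map_inv; split; first exact: quot_mapK.
split; first exact: quot_map_invK.
split; last exact: quot_map_inv_continuous.
by move=> F y hF /(final_pstopE _ hF); apply: quot_map_continuous.
Qed.

End CompactHausdorffQuotient.

(** * Real limits along filters *)

Definition tendsto {R : realType} {T : Type} (F : set (set T)) (h : T -> R) (L : R) :=
  forall e : R, 0 < e -> F [set p | `|h p - L| < e].

Section RealLimits.
Variables (R : realType) (T : Type) (F : set (set T)).
Hypothesis hF : is_filter F.
Let F_proper : ProperFilter F := is_filter_proper hF.
#[local] Existing Instance F_proper.

Lemma tendsto_cvg (h : T -> R) L : tendsto F h L <-> h @ (F : set_system T) --> L.
Proof. by rewrite cvgrPdistC_lt; split=> hh e e0; apply: hh. Qed.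

Lemma tendsto_cst (c : R) : tendsto F (fun=> c) c.
Proof. by apply/tendsto_cvg; apply: cvg_cst. Qed.

Lemma tendstoD (h g : T -> R) a b : tendsto F h a -> tendsto F g b ->
  tendsto F (fun p => h p + g p) (a + b).
Proof. by move=> /tendsto_cvg ha /tendsto_cvg hb; apply/tendsto_cvg; apply: cvgD. Qed.

Lemma tendstoB (h g : T -> R) a b : tendsto F h a -> tendsto F g b ->
  tendsto F (fun p => h p - g p) (a - b).
Proof. by move=> /tendsto_cvg ha /tendsto_cvg hb; apply/tendsto_cvg; apply: cvgB. Qed.

Lemma tendstoM (h g : T -> R) a b : tendsto F h a -> tendsto F g b ->
  tendsto F (fun p => h p * g p) (a * b).
Proof. by move=> /tendsto_cvg ha /tendsto_cvg hb; apply/tendsto_cvg; apply: cvgM. Qed.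

Lemma tendstoV (h : T -> R) a : a != 0 -> tendsto F h a ->
  tendsto F (fun p => (h p)^-1) a^-1.
Proof. by move=> a0 /tendsto_cvg ha; apply/tendsto_cvg; apply: cvgV. Qed.

Lemma tendstoX (h : T -> R) a n : tendsto F h a -> tendsto F (fun p => h p ^+ n) (a ^+ n).
Proof.
move=> ha; elim: n => [|n IH]; first by rewrite expr0; under eq_fun do rewrite expr0;
  apply: tendsto_cst.
by rewrite exprS; under eq_fun do rewrite exprS; apply: tendstoM.
Qed.

Lemma tendsto_sum (I : Type) (r : seq I) (h : I -> T -> R) (a : I -> R) :
  (forall i, tendsto F (h i) (a i)) ->
  tendsto F (fun p => \sum_(i <- r) h i p) (\sum_(i <- r) a i).
Proof.
move=> ha; elim: r => [|i r IH]; first by rewrite big_nil; under eq_fun do rewrite big_nil;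
  apply: tendsto_cst.
by rewrite big_cons; under eq_fun do rewrite big_cons; apply: tendstoD.
Qed.

Lemma tendsto_unique (h : T -> R) L L' : tendsto F h L -> tendsto F h L' -> L = L'.
Proof.
by move=> /tendsto_cvg hL /tendsto_cvg hL'; apply: (cvg_unique (@Rhausdorff R) hL hL').
Qed.

Lemma tendsto_ge (h : T -> R) L c : (forall p, c <= h p) -> tendsto F h L -> c <= L.
Proof.
move=> hc /tendsto_cvg; apply: (closed_cvg (fun x => c <= x)); first exact: closed_ge.
exact: nearW.
Qed.

Lemma tendsto_le (h : T -> R) L c : (forall p, h p <= c) -> tendsto F h L -> L <= c.
Proof.
move=> hc /tendsto_cvg; apply: (closed_cvg (fun x => x <= c)); first exact: closed_le.
exact: nearW.
Qed.

End RealLimits.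

Lemma tendsto_fimage {R : realType} {X Y : Type} {f : X -> Y} {F : set (set X)}
    {g : Y -> R} {L : R} :
  is_filter F -> tendsto (fimage f F) g L <-> tendsto F (g \o f) L.
Proof.
move=> hF; split=> h e e0; first by have /(fimage_preimage _ _ hF) := h e e0.
by apply/(fimage_preimage _ _ hF); apply: h.
Qed.

Lemma ultra_bounded_tendsto {R : realType} {T : Type} (U : set (set T)) (h : T -> R) B :
  is_ultra U -> (forall p, `|h p| <= B) -> exists L, tendsto U h L.
Proof.
move=> hU hB; have UF := is_filter_proper hU.1.
pose E := [set r : R | U [set p | r <= h p]].
have hE : has_sup E.
  split; first by exists (- B); apply: filterS filterT => p _ /=;
    rewrite lerNl (le_trans _ (hB p)) // -normrN ler_norm.
  exists B => r /filter_ex [p /= rp].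
  exact: le_trans rp (le_trans (ler_norm _) (hB p)).
(* by the ultrafilter dichotomy, h is eventually below sup E + e / 2 *)
exists (sup E) => e e0.
have [r Er supEr] := sup_adherent e0 hE.
have e20 : 0 < e / 2 by rewrite divr_gt0.
have [UE|UnE] := is_ultra_setVsetC [set p | sup E + e / 2 <= h p] hU.
  by have := sup_upper_bound hE UE; lra.
apply: filterS (filterI Er UnE) => p [/= rp /negP]; rewrite -ltNge => hp.
by rewrite ltr_norml; apply/andP; split; lra.
Qed.

(** * Spheres and the cylinder *)

Section MetricConvergence.
Variables (R : realType) (X : Type) (d : X -> X -> R) (g : X -> R).
Hypothesis g_lipschitz : forall x y, `|g x - g y| <= d x y.

Lemma metric_open_ball c e : metric_open d [set x | `|g x - c| < e].
Proof.
move=> z /= ze; exists (e - `|g z - c|); first by rewrite subr_gt0.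
move=> y dzy /=; have := g_lipschitz z y; have := ler_distD (g z) (g y) c.
by have := distrC (g y) (g z); lra.
Qed.

Lemma metric_conv_tendsto F x : top_conv (metric_open d) F x -> tendsto F g (g x).
Proof. by move=> Fx e e0; apply: Fx; [exact: metric_open_ball | rewrite /= subrr normr0]. Qed.

End MetricConvergence.

Lemma normr_lt_sqr {R : realType} (a b : R) : 0 <= b -> (`|a| < b) = (a ^+ 2 < b ^+ 2).
Proof. by move=> b0; rewrite -ltr_sqr ?nnegrE // real_normK ?num_real. Qed.

Lemma sqr_le_sum {R : realType} {k : nat} (u : 'I_k -> R) i :
  u i ^+ 2 <= \sum_(j < k) u j ^+ 2.
Proof. by rewrite (bigD1 i) //= lerDl; apply: sumr_ge0 => j _; apply: sqr_ge0. Qed.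

Section SphereConvergence.
Variables (R : realType) (k : nat).
Implicit Types (x y : sphere R k).

Lemma sphere_ext x y : sval x =1 sval y -> x = y.
Proof.
move: x y => [x hx] [y hy] /= /funext exy; subst y.
by congr exist; apply: Prop_irrelevance.
Qed.

Lemma sphere_coord_le1 x i : `|sval x i| <= 1.
Proof.
have := sqr_le_sum (sval x) i; rewrite (svalP x).
by rewrite -[in X in _ -> X]ler_sqr ?nnegrE // expr1n real_normK ?num_real.
Qed.

Lemma coord_le_sph_dist x y i : `|sval x i - sval y i| <= sph_dist x y.
Proof.
rewrite /sph_dist -sqrtr_sqr ler_sqrt; last by apply: sumr_ge0 => j _; apply: sqr_ge0.
exact: (sqr_le_sum (fun j => sval x j - sval y j)).
Qed.

Lemma sphere_tendsto F c : is_filter F ->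
  top_conv (sphere_open R k) F c <-> forall i, tendsto F (fun x => sval x i) (sval c i).
Proof.
move=> hF; have FF := is_filter_proper hF.
split=> [Fc i|Fc U oU Uc].
  exact: (metric_conv_tendsto (g := fun x => sval x i)
    (fun x y => coord_le_sph_dist x y i) Fc).
have [e e0 sU] := oU c Uc.
pose N : R := k.+1%:R; have N0 : 0 < N by rewrite ltr0Sn.
have d0 : 0 < e / N by rewrite divr_gt0.
have Fd : F [set x | forall i, `|sval x i - sval c i| < e / N].
  by apply: filter_forall => i; apply: Fc.
apply: filterS Fd => x /= Fx; apply: sU.
have hlt : \sum_(i < k.+1) (sval c i - sval x i) ^+ 2 < \sum_(i < k.+1) (e / N) ^+ 2.
  apply: ltr_sum; first by apply/hasP; exists ord0; rewrite ?mem_index_enum.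
  by move=> i _; rewrite -normr_lt_sqr ?ltW // distrC; apply: Fx.
have -> : e = Num.sqrt (e ^+ 2) by rewrite sqrtr_sqr (ger0_norm (ltW e0)).
rewrite /sph_dist ltr_sqrt ?exprn_gt0 //.
apply: (lt_le_trans hlt); rewrite sumr_const card_ord -mulr_natr -/N.
have dN : e / N * N = e by rewrite divfK // lt0r_neq0.
have N1 : 1 <= N by rewrite ler1n.
by move: dN; set d := e / N => <-; nra.
Qed.

Lemma sphere_hausdorff G w w' : is_filter G ->
  top_conv (sphere_open R k) G w -> top_conv (sphere_open R k) G w' -> w = w'.
Proof.
move=> hG /(sphere_tendsto _ hG) Gw /(sphere_tendsto _ hG) Gw'.
by apply: sphere_ext => i; exact: (tendsto_unique hG (Gw i) (Gw' i)).
Qed.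

End SphereConvergence.

Lemma interval_tendsto {R : realType} F (t : unit_interval R) : is_filter F ->
  top_conv (Defs.interval_open R) F t <-> tendsto F sval (sval t).
Proof.
move=> hF; have FF := is_filter_proper hF.
split; first exact: (metric_conv_tendsto (g := sval) (fun s s' => lexx _)).
move=> Ft U oU Ut; have [e e0 sU] := oU t Ut.
by apply: filterS (Ft e e0) => s /=; rewrite distrC; apply: sU.
Qed.

Section Cylinder.
Variables (R : realType) (m : nat).
Implicit Types (z p : sphere R m * unit_interval R).

Lemma cyl_conv_tendsto W p : is_filter W ->
  cyl_conv R m W p <->
  (forall i, tendsto W (fun z => sval z.1 i) (sval p.1 i)) /\
  tendsto W (fun z => sval z.2) (sval p.2).
Proof.
move=> hW; have hW1 := fimage_is_filter fst hW; have hW2 := fimage_is_filter snd hW.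
rewrite /cyl_conv /prod_conv (sphere_tendsto _ hW1) (interval_tendsto _ hW2).
split=> [[W1 W2]|[W1 W2]]; split.
- by move=> i; apply/(tendsto_fimage (f := fst) (g := fun x => sval x i) hW); apply: W1.
- by apply/(tendsto_fimage (f := snd) (g := sval) hW).
- by move=> i; apply/(tendsto_fimage (f := fst) (g := fun x => sval x i) hW); apply: W1.
- by apply/(tendsto_fimage (f := snd) (g := sval) hW).
Qed.

Lemma cyl_compact U : is_ultra U -> exists p, cyl_conv R m U p.
Proof.
move=> hU; have hUf := hU.1.
have [x Ux] := choice (fun i => ultra_bounded_tendsto (h := fun z => sval z.1 i) hU
  (fun z => sphere_coord_le1 z.1 i)).
have [t Ut] : exists t, tendsto U (fun z => sval z.2) t.
  apply: (ultra_bounded_tendsto (B := 1) hU) => z.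
  by have /andP [z0 z1] := svalP z.2; rewrite ger0_norm.
have x_sphere : \sum_(i < m.+1) x i ^+ 2 = 1.
  have Usum := tendsto_sum hUf (index_enum 'I_m.+1) (fun i => tendstoX hUf 2 (Ux i)).
  apply: (tendsto_unique hUf Usum).
  rewrite (_ : (fun z => _) = fun=> 1); first exact: tendsto_cst.
  by apply: funext => z; apply: (svalP z.1).
have t01 : 0 <= t <= 1.
  by apply/andP; split; [apply: (tendsto_ge hUf _ Ut) | apply: (tendsto_le hUf _ Ut)];
    move=> z; case/andP: (svalP z.2).
by exists (exist _ x x_sphere, exist _ t t01); apply/cyl_conv_tendsto.
Qed.

End Cylinder.

(** * The suspension map *)

Local Notation wid := (widen_ord (leqnSn _)).

Section Vectors.
Variable R : realType.

Definition dot {k : nat} (u v : 'I_k -> R) : R := \sum_(i < k) u i * v i.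

Definition gap {k : nat} (b u : 'I_k -> R) : R := 1 - dot u b.

Lemma dot_sqr {k : nat} (u : 'I_k -> R) : dot u u = \sum_(i < k) u i ^+ 2.
Proof. by apply: eq_bigr => i _; rewrite expr2. Qed.

Lemma sphere_dot {k : nat} (x : sphere R k) : dot (sval x) (sval x) = 1.
Proof. by rewrite dot_sqr (svalP x). Qed.

Lemma sum_sqrB {k : nat} (u v : 'I_k -> R) :
  \sum_(i < k) (u i - v i) ^+ 2 = dot u u - 2 * dot u v + dot v v.
Proof.
rewrite (eq_bigr (fun i => u i * u i - 2 * (u i * v i) + v i * v i)) => [|i _]; last by ring.
by rewrite big_split sumrB -mulr_sumr.
Qed.

Lemma sum_sqrB_eq0 {k : nat} (u v : 'I_k -> R) :
  \sum_(i < k) (u i - v i) ^+ 2 = 0 -> u = v.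
Proof.
move=> S0; apply: funext => i; apply/eqP; rewrite -subr_eq0 -sqrf_eq0 eq_le sqr_ge0 andbT.
by rewrite -S0 (sqr_le_sum (fun j => u j - v j)).
Qed.

Section Gap.
Variables (k : nat) (b u : 'I_k -> R).
Hypotheses (hb : dot b b = 1) (hu : dot u u = 1).

Lemma dist2_gap : \sum_(i < k) (u i - b i) ^+ 2 = 2 * gap b u.
Proof. by rewrite sum_sqrB hu hb /gap; ring. Qed.

Lemma gap_ge0 : 0 <= gap b u.
Proof.
have : 0 <= \sum_(i < k) (u i - b i) ^+ 2 by apply: sumr_ge0 => i _; apply: sqr_ge0.
by rewrite dist2_gap pmulr_rge0.
Qed.

Lemma sqr_le_gap i : (u i - b i) ^+ 2 <= 2 * gap b u.
Proof. by rewrite -dist2_gap; apply: (sqr_le_sum (fun j => u j - b j)). Qed.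

Lemma gap_eq0 : gap b u = 0 -> u = b.
Proof. by move=> g0; apply: sum_sqrB_eq0; rewrite dist2_gap g0 mulr0. Qed.

End Gap.

Definition extend {m : nat} (u : 'I_m.+1 -> R) (c : R) (j : 'I_m.+2) : R :=
  if (j < m.+1)%N then u (inord j) else c.

Lemma extend_wid {m : nat} (u : 'I_m.+1 -> R) c i : extend u c (wid i) = u i.
Proof. by rewrite /extend /= ltn_ord inord_val. Qed.

Lemma extend_max {m : nat} (u : 'I_m.+1 -> R) c : extend u c ord_max = c.
Proof. by rewrite /extend /= ltnn. Qed.

Lemma extendE {m : nat} (w : 'I_m.+2 -> R) : extend (fun i => w (wid i)) (w ord_max) = w.
Proof.
apply: funext => j; rewrite /extend; case: ifP => [jm|/negbT].
  by congr w; apply: val_inj; rewrite /= inordK.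
by rewrite -leqNgt => jm; congr w; apply: val_inj; apply/eqP; rewrite eqn_leq jm -ltnS ltn_ord.
Qed.

Lemma dot_extend {m : nat} (u v : 'I_m.+1 -> R) c c' :
  dot (extend u c) (extend v c') = dot u v + c * c'.
Proof.
by rewrite /dot big_ord_recr /= !extend_max; under eq_bigr do rewrite !extend_wid.
Qed.

End Vectors.

Section Hump.
Variable R : realType.
Implicit Types t s : R.

Definition hump t := t * (1 - t).
Definition tilt t := 2 * t - 1.

Lemma tilt_sqr t : tilt t ^+ 2 = 1 - 4 * hump t.
Proof. by rewrite /tilt /hump; ring. Qed.

Lemma hump_gt0 t : 0 < t < 1 -> 0 < hump t.
Proof. by case/andP=> t0 t1; rewrite /hump mulr_gt0 // subr_gt0. Qed.

Lemma tilt_hump_inj t t' : 0 < t < 1 -> 0 < t' < 1 ->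
  tilt t * hump t' = tilt t' * hump t -> t = t'.
Proof.
move=> /andP [t0 t1] /andP [t0' t1'] htt; apply/eqP; rewrite -subr_eq0.
have -> : t - t' = (tilt t * hump t' - tilt t' * hump t) / (t * t' + (1 - t) * (1 - t')).
  by rewrite /tilt /hump; field; nra.
by rewrite htt subrr mul0r.
Qed.

Lemma tilt_hump_surj s : exists2 t, 0 < t < 1 & tilt t = s * hump t.
Proof.
(* t = 2 / u is the root in (0,1) of s t^2 + (2 - s) t - 1 = 0 *)
pose r := Num.sqrt (s ^+ 2 + 4).
have r2 : r ^+ 2 = s ^+ 2 + 4 by rewrite sqr_sqrtr // addr_ge0 // sqr_ge0.
have r0 : 0 <= r by apply: sqrtr_ge0.
have rs : `|s| < r by rewrite normr_lt_sqr // r2; lra.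
move: rs; rewrite ltr_norml => /andP [rs1 rs2].
pose u := 2 - s + r; have u2 : 2 < u by rewrite /u; lra.
have u0 : u != 0 by rewrite gt_eqF //; lra.
have hu : u ^+ 2 - 2 * (2 - s) * u - 4 * s = 0.
  have -> : u ^+ 2 - 2 * (2 - s) * u - 4 * s = r ^+ 2 - (s ^+ 2 + 4) by rewrite /u; ring.
  by rewrite r2 subrr.
exists (2 / u); first by rewrite divr_gt0 ?ltr_pdivrMr /=; lra.
have : (tilt (2 / u) - s * hump (2 / u)) * u ^+ 2 = - (u ^+ 2 - 2 * (2 - s) * u - 4 * s).
  by rewrite /tilt /hump; field.
rewrite hu oppr0 => /eqP; rewrite mulf_eq0 expf_eq0 (negbTE u0) andbF orbF subr_eq0.
by move/eqP.
Qed.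

End Hump.

(* With a = gap e x, b = hump t, d = tilt t and D = den x t = 2 b^2 + a d^2,
   susp x t = (e + (2 b^2 / D) (x - e), 2 a b d / D).  The collapsed set
   (b = 0 or a = 0) goes to the pole (e, 0); D vanishes only at x = e,
   t = 0 or 1, where division by 0 = 0 also gives the pole.  Elsewhere w =
   susp x t determines (x, t): height / (scale * a) = d / b fixes t, then
   |w| = 1 fixes scale (height_sqr), and x - e = (w' - e) / scale. *)
Section SuspensionFormula.
Variables (R : realType) (m : nat) (e : 'I_m.+1 -> R).
Hypothesis he : dot e e = 1.
Implicit Types (x u : 'I_m.+1 -> R) (t : R).

Definition den x t := 2 * hump t ^+ 2 + gap e x * tilt t ^+ 2.
Definition scale x t := 2 * hump t ^+ 2 / den x t.
Definition height x t := 2 * gap e x * hump t * tilt t / den x t.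
Definition affine (K : R) u (i : 'I_m.+1) := e i + K * (u i - e i).
Definition susp x t := extend (affine (scale x t) x) (height x t).
Definition pole := extend e 0.

Lemma dot_affine_base K u : dot (affine K u) e = 1 - K * gap e u.
Proof.
have -> : dot (affine K u) e = dot e e + K * (dot u e - dot e e).
  rewrite /dot (eq_bigr (fun i => e i * e i + K * (u i * e i - e i * e i))) => [|i _].
    by rewrite big_split -mulr_sumr sumrB.
  by rewrite /affine; ring.
by rewrite he /gap; ring.
Qed.

Lemma dot_affine_self K u :
  dot (affine K u) (affine K u) = 1 - 2 * K * gap e u + K ^+ 2 * \sum_i (u i - e i) ^+ 2.
Proof.
have -> : dot (affine K u) (affine K u) =
    dot e e + 2 * K * (dot u e - dot e e) + K ^+ 2 * \sum_i (u i - e i) ^+ 2.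
  rewrite /dot (eq_bigr (fun i => (e i * e i + 2 * K * (u i * e i - e i * e i))
    + K ^+ 2 * (u i - e i) ^+ 2)) => [|i _]; last by rewrite /affine; ring.
  by rewrite !big_split -!mulr_sumr sumrB.
by rewrite he /gap; ring.
Qed.

Lemma pole_sphere : dot pole pole = 1.
Proof. by rewrite dot_extend he mulr0 addr0. Qed.

Lemma gap_pole u c : gap pole (extend u c) = gap e u.
Proof. by rewrite /gap dot_extend mulr0 addr0. Qed.

Lemma gap_susp x t : gap pole (susp x t) = scale x t * gap e x.
Proof. by rewrite gap_pole /gap dot_affine_base /gap; ring. Qed.

Lemma height_sqr x t : height x t ^+ 2 = 2 * (scale x t * gap e x) * (1 - scale x t).
Proof.
rewrite /height /scale; have [->|] := eqVneq (den x t) 0; first by rewrite invr0; ring.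
by rewrite /den => D0; field.
Qed.

Lemma height_hump x t : height x t * hump t = scale x t * gap e x * tilt t.
Proof. by rewrite /height /scale; ring. Qed.

Lemma susp_sphere x t : dot x x = 1 -> dot (susp x t) (susp x t) = 1.
Proof.
move=> hx; have := height_sqr x t; rewrite expr2 => hh.
by rewrite dot_extend dot_affine_self dist2_gap // hh; ring.
Qed.

Lemma susp_pole x t : dot x x = 1 -> hump t = 0 \/ gap e x = 0 -> susp x t = pole.
Proof.
move=> hx [b0|g0]; rewrite /susp /pole /scale /height.
  by rewrite b0; congr extend; [apply: funext => i; rewrite /affine | ]; ring.
have xe := gap_eq0 he hx g0; rewrite g0 xe; congr extend; last by ring.
by apply: funext => i; rewrite /affine subrr mulr0 addr0.
Qed.

Lemma den_ge0 x t : 0 <= gap e x -> 0 <= den x t.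
Proof. by move=> gx; apply: addr_ge0; apply: mulr_ge0 => //; apply: sqr_ge0. Qed.

Lemma den_gt0 x t : 0 < gap e x -> 0 < den x t.
Proof.
move=> gx; rewrite lt_def den_ge0 ?ltW // andbT; apply/eqP => D0.
have b0 : hump t = 0.
  apply/eqP; rewrite -sqrf_eq0 eq_le sqr_ge0 andbT; move: D0; rewrite /den.
  by have := mulr_ge0 (ltW gx) (sqr_ge0 (tilt t)); lra.
by move: D0; rewrite /den tilt_sqr b0; lra.
Qed.

Lemma scale_ge0 x t : 0 <= gap e x -> 0 <= scale x t.
Proof. by move=> gx; rewrite divr_ge0 ?den_ge0 // mulr_ge0 ?sqr_ge0. Qed.

Lemma scale_le1 x t : 0 <= gap e x -> scale x t <= 1.
Proof.
move=> gx; rewrite /scale; have [->|D0] := eqVneq (den x t) 0; first by rewrite invr0 mulr0.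
have Dp : 0 < den x t by rewrite lt_def D0 den_ge0.
by rewrite ler_pdivrMr // mul1r lerDl mulr_ge0 ?sqr_ge0.
Qed.

Lemma scale_gt0 x t : 0 <= gap e x -> 0 < t < 1 -> 0 < scale x t.
Proof.
move=> gx /hump_gt0 b0; have b2 : 0 < 2 * hump t ^+ 2 by rewrite mulr_gt0 ?exprn_gt0.
by rewrite divr_gt0 // (lt_le_trans b2) // lerDl mulr_ge0 ?sqr_ge0.
Qed.

Lemma den_tilt x t s : tilt t = s * hump t ->
  den x t = hump t ^+ 2 * (2 + gap e x * s ^+ 2).
Proof. by rewrite /den => ->; ring. Qed.

Lemma scale_tilt x t s : 0 < t < 1 -> tilt t = s * hump t ->
  scale x t = 2 / (2 + gap e x * s ^+ 2).
Proof.
move=> /hump_gt0 /lt0r_neq0 b0 ts; rewrite /scale (den_tilt _ ts).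
have [->|D0] := eqVneq (2 + gap e x * s ^+ 2) 0; first by rewrite !mulr0 !invr0 !mulr0.
by field; rewrite D0 b0.
Qed.

Lemma height_tilt x t s : 0 < t < 1 -> tilt t = s * hump t ->
  height x t = 2 * gap e x * s / (2 + gap e x * s ^+ 2).
Proof.
move=> /hump_gt0 /lt0r_neq0 b0 ts; rewrite /height (den_tilt _ ts) ts.
have [->|D0] := eqVneq (2 + gap e x * s ^+ 2) 0; first by rewrite !mulr0 !invr0 !mulr0.
by field; rewrite D0 b0.
Qed.

Lemma susp_inj x x' t t' : dot x x = 1 -> dot x' x' = 1 -> 0 < t < 1 -> 0 < t' < 1 ->
  0 < gap e x -> 0 < gap e x' -> susp x t = susp x' t' -> x = x' /\ t = t'.
Proof.
move=> hx hx' ht ht' gx gx' eq_susp.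
have hgap : scale x t * gap e x = scale x' t' * gap e x' by rewrite -!gap_susp eq_susp.
have hh : height x t = height x' t'.
  by have := congr1 (fun w => w ord_max) eq_susp; rewrite /= /susp !extend_max.
have a0 : 0 < scale x t * gap e x by rewrite mulr_gt0 // scale_gt0 // ltW.
have tt' : t = t'.
  apply: tilt_hump_inj ht ht' _; apply: (mulfI (lt0r_neq0 a0)).
  have : height x t * hump t * hump t' = height x' t' * hump t' * hump t by rewrite hh; ring.
  by rewrite !height_hump -hgap !mulrA.
subst t'; have s0 := scale_gt0 (ltW gx') ht.
have ss : scale x t = scale x' t.
  have : 2 * (scale x t * gap e x) * (scale x t - scale x' t) = 0.
    have := height_sqr x t; rewrite hh height_sqr -hgap => /eqP; rewrite -subr_eq0 => /eqP H.
    by rewrite -H; ring.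
  move/eqP; rewrite mulf_eq0 mulf_eq0 pnatr_eq0 (negbTE (lt0r_neq0 a0)) /= subr_eq0.
  by move/eqP.
split=> //; apply: funext => i.
have := congr1 (fun w => w (wid i)) eq_susp; rewrite /= /susp !extend_wid /affine ss.
by move=> /addrI /(mulfI (lt0r_neq0 s0)) /addIr.
Qed.

Lemma susp_surj w : dot w w = 1 -> 0 < gap pole w ->
  exists x t, [/\ dot x x = 1, 0 < t < 1 & susp x t = w].
Proof.
move=> hw; set a := gap pole w => a0.
pose u i := w (wid i); pose c := w ord_max.
have wE : extend u c = w := extendE w.
have gu : gap e u = a by rewrite /a -wE gap_pole.
have hS : \sum_i (u i - e i) ^+ 2 = 2 * a - c ^+ 2.
  have := dist2_gap pole_sphere hw; rewrite big_ord_recr /= /pole extend_max subr0 => <-.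
  by rewrite addrK; apply: eq_bigr => i _; rewrite extend_wid.
have g0 : 2 * a - c ^+ 2 != 0.
  rewrite -hS; apply/eqP => /sum_sqrB_eq0 ue.
  by move: a0; rewrite -gu ue /gap he subrr ltxx.
pose K := 2 * a / (2 * a - c ^+ 2); pose x := affine K u.
have hx : dot x x = 1 by rewrite dot_affine_self gu hS /K; field.
have gx : gap e x = K * a by rewrite /gap dot_affine_base -/(gap e u) gu; ring.
have [t t01 ts] := tilt_hump_surj (c / a).
have a4 : 2 * (2 * a - c ^+ 2) + 2 * c ^+ 2 != 0 by apply: lt0r_neq0; lra.
have an0 := lt0r_neq0 a0.
exists x, t; split => //.
rewrite -wE /susp (scale_tilt _ t01 ts) (height_tilt _ t01 ts) gx /K; congr extend.
  by apply: funext => i; rewrite /x /affine /K; field; rewrite g0 an0 a4.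
by field; rewrite g0 an0 a4.
Qed.

Section Continuity.
Variables (T : Type) (W : set (set T)) (X : T -> 'I_m.+1 -> R) (tt : T -> R).
Variables (x : 'I_m.+1 -> R) (t : R).
Hypothesis hW : is_filter W.
Hypothesis WX : forall i, tendsto W (fun p => X p i) (x i).
Hypothesis Wt : tendsto W tt t.

Let Wc : forall c : R, tendsto W (fun=> c) c := tendsto_cst hW.

Lemma tendsto_gap : tendsto W (fun p => gap e (X p)) (gap e x).
Proof.
exact: (tendstoB hW (Wc 1)
  (tendsto_sum hW (index_enum 'I_m.+1) (fun i => tendstoM hW (WX i) (Wc (e i))))).
Qed.

Lemma susp_tendsto_pole j : (forall p, dot (X p) (X p) = 1) -> gap e x = 0 ->
  tendsto W (fun p => susp (X p) (tt p) j) (pole j).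
Proof.
move=> hX gx r r0; have WF := is_filter_proper hW.
have r2 : 0 < r ^+ 2 / 2 by rewrite divr_gt0 ?exprn_gt0.
apply: filterS (tendsto_gap r2) => p /=; rewrite gx subr0 => gp.
have g0 := gap_ge0 he (hX p); rewrite ger0_norm // in gp.
rewrite normr_lt_sqr ?ltW //.
apply: le_lt_trans (sqr_le_gap pole_sphere (susp_sphere _ (hX p)) j) _.
have := scale_le1 (tt p) g0; have := scale_ge0 (tt p) g0.
by rewrite gap_susp; nra.
Qed.

Lemma susp_tendsto_regular j : 0 < gap e x ->
  tendsto W (fun p => susp (X p) (tt p) j) (susp x t j).
Proof.
move=> gx.
have Whump : tendsto W (fun p => hump (tt p)) (hump t) :=
  tendstoM hW Wt (tendstoB hW (Wc 1) Wt).
have Wtilt : tendsto W (fun p => tilt (tt p)) (tilt t) :=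
  tendstoB hW (tendstoM hW (Wc 2) Wt) (Wc 1).
have W2hump2 := tendstoM hW (Wc 2) (tendstoX hW 2 Whump).
have Wden : tendsto W (fun p => den (X p) (tt p)) (den x t) :=
  tendstoD hW W2hump2 (tendstoM hW tendsto_gap (tendstoX hW 2 Wtilt)).
have Widen := tendstoV hW (lt0r_neq0 (den_gt0 t gx)) Wden.
have Wscale : tendsto W (fun p => scale (X p) (tt p)) (scale x t) :=
  tendstoM hW W2hump2 Widen.
have Wheight : tendsto W (fun p => height (X p) (tt p)) (height x t) :=
  tendstoM hW (tendstoM hW (tendstoM hW (tendstoM hW (Wc 2) tendsto_gap) Whump) Wtilt) Widen.
have Waffine i : tendsto W (fun p => affine (scale (X p) (tt p)) (X p) i)
    (affine (scale x t) x i) :=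
  tendstoD hW (Wc (e i)) (tendstoM hW Wscale (tendstoB hW (WX i) (Wc (e i)))).
by rewrite /susp /extend; case: ifP.
Qed.

Lemma susp_tendsto j : (forall p, dot (X p) (X p) = 1) -> dot x x = 1 ->
  tendsto W (fun p => susp (X p) (tt p) j) (susp x t j).
Proof.
move=> hX hx; have := gap_ge0 he hx; rewrite le_eqVlt => /orP [/eqP g0|g0].
  by rewrite (susp_pole hx (or_intror (esym g0))); apply: susp_tendsto_pole.
exact: susp_tendsto_regular.
Qed.

End Continuity.

End SuspensionFormula.

Lemma unit_interval0_subproof {R : realType} : (0 : R) <= 0 <= (1 : R).
Proof. by rewrite lexx ler01. Qed.

Definition unit_interval0 {R : realType} : unit_interval R :=
  exist _ 0 unit_interval0_subproof.

Lemma sphere_of_dot {R : realType} {k : nat} (u : 'I_k.+1 -> R) :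
  dot u u = 1 -> \sum_(i < k.+1) u i ^+ 2 = 1.
Proof. by rewrite dot_sqr. Qed.

Section SuspensionMap.
Variables (R : realType) (m : nat) (pt : sphere R m).
Local Notation e := (sval pt).
Let he : dot e e = 1 := sphere_dot pt.
Implicit Types (z : sphere R m * unit_interval R).

Definition susp_map z : sphere R m.+1 :=
  exist _ (susp e (sval z.1) (sval z.2)) (sphere_of_dot (susp_sphere he _ (sphere_dot z.1))).

Definition pole_point : sphere R m.+1 := exist _ (pole e) (sphere_of_dot (pole_sphere he)).

Lemma not_collapsed z :
  ~ susp_collapsed pt z -> 0 < sval z.2 < 1 /\ 0 < gap e (sval z.1).
Proof.
move=> nz; split.
  have /andP [t0 t1] := svalP z.2.
  by rewrite !lt_neqAle t0 t1 !andbT; apply/andP; split; apply/eqP => t01; apply: nz;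
    [left | right; left].
rewrite lt_neqAle gap_ge0 ?sphere_dot // andbT; apply/eqP => g0; apply: nz; right; right.
by apply: sphere_ext => i; rewrite (gap_eq0 he (sphere_dot _) (esym g0)).
Qed.

Lemma susp_map_pole z : susp_map z = pole_point <-> susp_collapsed pt z.
Proof.
split=> [zP|hz]; last first.
  apply: sphere_ext => j /=; rewrite (susp_pole he (sphere_dot z.1)) //.
  case: hz => [->|[->|->]]; [left | left | right]; rewrite /hump ?/gap ?he; ring.
apply: contrapT => /not_collapsed [t01 g0].
have := gap_susp he (sval z.1) (sval z.2); rewrite -[susp _ _ _]/(sval (susp_map z)) zP /=.
rewrite /gap pole_sphere // subrr => /esym /eqP; rewrite mulf_eq0 !gt_eqF //=.
exact: scale_gt0 (ltW g0) t01.
Qed.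

Lemma susp_map_ker a b : susp_map a = susp_map b <-> susp_rel pt a b.
Proof.
split=> [eq_ab|[->//|[/susp_map_pole -> /susp_map_pole ->//]]].
have [ca|na] := pselect (susp_collapsed pt a); have [cb|nb] := pselect (susp_collapsed pt b).
- by right.
- by move: ca; rewrite -susp_map_pole eq_ab susp_map_pole.
- by move: cb; rewrite -susp_map_pole -eq_ab susp_map_pole.
have [ta ga] := not_collapsed na; have [tb gb] := not_collapsed nb.
have [xab tab] := susp_inj he (sphere_dot _) (sphere_dot _) ta tb ga gb (congr1 sval eq_ab).
left; move: a b {eq_ab na nb ta ga tb gb} xab tab => [x s] [y t] /= xab st.
by congr pair; [apply: sphere_ext => i; rewrite xab | apply: val_inj].
Qed.

Lemma susp_map_surj w : exists z, susp_map z = w.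
Proof.
have hw := sphere_dot w.
have := gap_ge0 (pole_sphere he) hw; rewrite le_eqVlt => /orP [/eqP g0|g0].
  exists (pt, unit_interval0); apply/esym/sphere_ext => j.
  rewrite (gap_eq0 (pole_sphere he) hw (esym g0)).
  by have /susp_map_pole -> : susp_collapsed pt (pt, unit_interval0) by right; right.
have [x [t [hx t01 xtw]]] := susp_surj he hw g0.
have t01' : 0 <= t <= 1 by case/andP: t01 => t0 t1; rewrite !ltW.
exists (exist _ x (sphere_of_dot hx), exist _ t t01').
by apply: sphere_ext => j /=; rewrite xtw.
Qed.

Lemma susp_map_continuous :
  conv_continuous (cyl_conv R m) (top_conv (sphere_open R m.+1)) susp_map.
Proof.
move=> W z hW /(cyl_conv_tendsto _ hW) [Wx Wt].
apply/(sphere_tendsto _ (fimage_is_filter _ hW)) => j.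
apply/(tendsto_fimage (f := susp_map) (g := fun w => sval w j) hW).
exact: susp_tendsto hW Wx Wt j (fun p => sphere_dot p.1) (sphere_dot z.1).
Qed.

End SuspensionMap.

Theorem mainTheorem6 (R : realType) (n : nat) (hn : (1 <= n)%N)
  (pt : sphere R n.-1) (Q : Type) (q : sphere R n.-1 * unit_interval R -> Q)
  (q_surj : forall y : Q, exists a, q a = y)
  (q_ker : forall a b, q a = q b <-> susp_rel pt a b) :
  (forall (F : set (set Q)) (y : Q), is_filter F ->
     (final_pstop (cyl_conv R n.-1) q F y <->
      top_conv (quot_open (cyl_open R n.-1) q) F y)) /\
  conv_homeomorphic (final_pstop (cyl_conv R n.-1) q)
                    (top_conv (sphere_open R n)).
Proof.
case: n hn pt q q_surj q_ker => [//|m] _ pt q q_surj q_ker.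
apply: (compact_hausdorff_quotient (f := susp_map pt)) => //.
- exact: cyl_compact.
- by move=> F p hF; apply: prod_conv_top.
- apply: prod_continuous_open; [exact: metric_openT | exact: metric_openT |
    exact: metric_openI | exact: metric_openI | exact: susp_map_continuous].
- by move=> a b; rewrite q_ker; apply: susp_map_ker.
- exact: susp_map_surj.
- exact: sphere_hausdorff.
Qed.
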